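(* For every $\delta>0$ there exists $\eta>0$ such that the following holds. Let $G$ be an abelian group, $H$ a finite subgroup of $G$, and $T \subset H$ a non-empty subset with $|T|/|H| < \eta$. Then \[\left|\epsilon^*(H\setminus T) - \frac{|T|}{|H|}\right| \le \delta\,\frac{|T|}{|H|}.\] That is, the smallest $\epsilon$ for which $H\setminus T$ is a distributional $\epsilon$-approximate group equals $|T|/|H| + o(|T|/|H|)$ as $|T|/|H| \to 0$.
   Context: For a non-empty finite subset $A$ of an abelian group $G$, define $\epsilon^*(A) = 1 - \max_{U \subset G,\, |U|=|A|} \frac{|\{(a,b)\in A\times A : a+b \in U\}|}{|A|^2}$. Thus $A$ is a distributional $\epsilon$-approximate group (i.e. there exists $U\subset G$ with $|U|=|A|$ such that the proportion of pairs $(a,b)\in A\times A$ with $a+b\in U$ is at least $1-\epsilon$) if and only if $\epsilon \ge \epsilon^*(A)$. *)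

From HB Require Import structures.
From mathcomp Require Import all_boot all_order all_algebra finmap.
From Stdlib Require Import ClassicalEpsilon.
Set Implicit Arguments.
Unset Strict Implicit.
Unset Printing Implicit Defensive.
Import Order.TTheory GRing.Theory Num.Theory.
Local Open Scope fset_scope.
Local Open Scope ring_scope.

Definition decide (P : Prop) : bool :=
  if excluded_middle_informative P then true else false.

Definition is_fsubgroup (G : zmodType) (H : {fset G}) : Prop :=
  0 \in H /\ (forall x y, x \in H -> y \in H -> x - y \in H).

Definition pair_count (G : zmodType) (A U : {fset G}) : nat :=
  (\sum_(a <- A) \sum_(b <- A) nat_of_bool ((a + b)%R \in U))%N.

(* max over U \subset G with |U| = |A| of pair_count A U.
   All values lie in [0, |A|^2], so this is the max over attained values. *)
Definition max_pair_count (G : zmodType) (A : {fset G}) : nat :=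
  (\max_(k < (#|` A| ^ 2).+1 |
          decide (exists U : {fset G}, #|` U| = #|` A| /\ pair_count A U = k))
     (k : nat))%N.

Definition eps_star (R : realFieldType) (G : zmodType) (A : {fset G}) : R :=
  1 - (max_pair_count A)%:R / ((#|` A| ^ 2)%N)%:R.

From HB Require Import structures.
From mathcomp Require Import all_boot all_order all_algebra finmap.
From Stdlib Require Import ClassicalEpsilon.
From mathcomp Require Import zify ring lra.
Set Implicit Arguments.
Unset Strict Implicit.
Unset Printing Implicit Defensive.
Import Order.TTheory GRing.Theory Num.Theory.
Local Open Scope fset_scope.
Local Open Scope nat_scope.

(* Write A = H \ T, k = |A|, t = |T| and u = t / k. For a in H the translate
   a + H is H, so every row {b in H | a + b in U} has the same size m <= |U|.
   Counting the pairs of A x A with sum in U by rows over A and by columns over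
   T gives pair_count A U = (k - t) m + pair_count T U <= k (k - t) + t^2,
   while U = A achieves at least k (k - t). Hence u - u^2 <= eps*(A) <= u, and
   |T| / |H| = u / (1 + u) is within u^2 / (1 + u) of both bounds. *)

Lemma decideP (P : Prop) : reflect P (decide P).
Proof. by rewrite /decide; case: excluded_middle_informative; constructor. Qed.

Lemma sum_nat_of_bool (I : Type) (s : seq I) (P : pred I) :
  \sum_(i <- s) nat_of_bool (P i) = count P s.
Proof.
by rewrite -sum1_count [RHS]big_mkcond; apply: eq_bigr => i _; case: (P i).
Qed.

Lemma count_mem_le_cardfs (K : choiceType) (s : seq K) (U : {fset K}) :
  uniq s -> count (mem U) s <= #|` U|.
Proof.
move=> s_uniq; rewrite -size_filter; apply: uniq_leq_size.
  by rewrite filter_uniq.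
by move=> x; rewrite mem_filter => /andP[].
Qed.

Lemma big_fsetDS (R : Type) (idx : R) (op : Monoid.com_law idx)
    (K : choiceType) (A B : {fset K}) (F : K -> R) : B `<=` A ->
  \big[op/idx]_(i <- A) F i =
    op (\big[op/idx]_(i <- A `\` B) F i) (\big[op/idx]_(i <- B) F i).
Proof.
move=> /fsubsetP sBA; rewrite (big_fsetID _ (mem B)) Monoid.mulmC.
congr (op _ _); apply: eq_fbigl => i; rewrite !inE /=; first exact: andbC.
exact/andb_idl/sBA.
Qed.

Lemma pair_count_le (G : zmodType) (A U : {fset G}) :
  pair_count A U <= #|` A| ^ 2.
Proof.
rewrite /pair_count -mulnn {1}card_fset_sum1 big_distrl /=.
apply: leq_sum => a _.
by rewrite mul1n card_fset_sum1; apply: leq_sum => b _; apply: leq_b1.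
Qed.

Lemma pair_count_le_max (G : zmodType) (A U : {fset G}) :
  #|` U| = #|` A| -> pair_count A U <= max_pair_count A.
Proof.
move=> cardU.
have lt_sq : pair_count A U < (#|` A| ^ 2).+1 by rewrite ltnS pair_count_le.
apply: (@leq_bigmax_cond _ _ (fun k : 'I_ _ => (k : nat)) (Ordinal lt_sq)).
by apply/decideP; exists U.
Qed.

Lemma max_pair_count_le (G : zmodType) (A : {fset G}) (m : nat) :
  (forall U : {fset G}, #|` U| = #|` A| -> pair_count A U <= m) ->
  max_pair_count A <= m.
Proof.
by move=> le_m; apply/bigmax_leqP => k /decideP[U [cardU <-]]; apply: le_m.
Qed.

Section FiniteSubgroup.
Variables (G : zmodType) (H : {fset G}).
Hypothesis subH : is_fsubgroup H.

Lemma fsubgroupD a b : a \in H -> b \in H -> (a + b)%R \in H.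
Proof.
case: subH => H0 subHB aH bH.
by rewrite -[b]opprK -[(- b)%R]add0r; apply: (subHB) => //; apply: subHB.
Qed.

Lemma count_addr_fsubgroup (U : {fset G}) b : b \in H ->
  count (fun a => (a + b)%R \in U) H = count (mem U) H.
Proof.
move=> bH; rewrite -(count_map (+%R^~ b) (mem U)); apply/permP.
apply: uniq_perm; rewrite ?(map_inj_uniq (addIr b)) ?fset_uniq // => x.
apply/mapP/idP => [[a aH ->] | xH]; first exact: fsubgroupD.
by exists (x - b)%R; rewrite ?subrK //; case: subH => _; apply.
Qed.

Lemma count_addl_fsubgroup (U : {fset G}) a : a \in H ->
  count (fun b => (a + b)%R \in U) H = count (mem U) H.
Proof.
move=> aH; rewrite -(count_addr_fsubgroup U aH).
by apply: eq_count => b; rewrite addrC.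
Qed.

Variable T : {fset G}.
Hypothesis sTH : T `<=` H.
Local Notation A := (H `\` T).

Lemma sum_fsetD_addl (U : {fset G}) a : a \in H ->
  \sum_(b <- A) nat_of_bool ((a + b)%R \in U)
    + \sum_(b <- T) nat_of_bool ((a + b)%R \in U) = count (mem U) H.
Proof.
by move=> aH; rewrite -big_fsetDS // sum_nat_of_bool count_addl_fsubgroup.
Qed.

Lemma sum_fsetD_addr (U : {fset G}) b : b \in H ->
  \sum_(a <- A) nat_of_bool ((a + b)%R \in U)
    + \sum_(a <- T) nat_of_bool ((a + b)%R \in U) = count (mem U) H.
Proof.
by move=> bH; rewrite -big_fsetDS // sum_nat_of_bool count_addr_fsubgroup.
Qed.

Lemma pair_count_fsetD_le (U : {fset G}) : #|` U| <= #|` A| ->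
  pair_count A U <= #|` A| * (#|` A| - #|` T|) + #|` T| ^ 2.
Proof.
move=> cardU; set m := count (mem U) H.
have le_m : m <= #|` A|.
  exact: leq_trans (count_mem_le_cardfs U (fset_uniq H)) cardU.
set X := \sum_(a <- A) \sum_(b <- T) nat_of_bool ((a + b)%R \in U).
have rowsA : pair_count A U + X = #|` A| * m.
  rewrite -big_split card_fset_sum1 big_distrl /= big_seq [RHS]big_seq.
  apply: eq_bigr => a /(fsubsetP (fsubsetDl _ _)) aH.
  by rewrite mul1n sum_fsetD_addl.
have colsT : X + pair_count T U = #|` T| * m.
  rewrite /X /pair_count exchange_big [X in _ + X]exchange_big -big_split /=.
  rewrite card_fset_sum1 big_distrl /= big_seq [RHS]big_seq.
  by apply: eq_bigr => b /(fsubsetP sTH) bH; rewrite mul1n sum_fsetD_addr.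
have := pair_count_le T U; nia.
Qed.

Lemma pair_count_fsetD_self : #|` A| * (#|` A| - #|` T|) <= pair_count A A.
Proof.
rewrite {1}card_fset_sum1 big_distrl /= big_seq [X in _ <= X]big_seq.
apply: leq_sum => a /(fsubsetP (fsubsetDl _ _)) aH; rewrite mul1n.
have rowA : \sum_(b <- A) nat_of_bool ((a + b)%R \in A)
    + \sum_(b <- A) nat_of_bool ((a + b)%R \in T) = #|` A|.
  rewrite -big_split card_fset_sum1 big_seq [RHS]big_seq.
  apply: eq_bigr => b /(fsubsetP (fsubsetDl _ _)) bH.
  by rewrite in_fsetD fsubgroupD //; case: (_ \in T).
have rowT : \sum_(b <- A) nat_of_bool ((a + b)%R \in T) <= #|` T|.
  pose rowT := \sum_(b <- T) nat_of_bool ((a + b)%R \in T).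
  rewrite (leq_trans (leq_addr rowT _)) //.
  by rewrite sum_fsetD_addl // count_mem_le_cardfs ?fset_uniq.
by rewrite -rowA leq_subLR addnC leq_add2r.
Qed.

Lemma max_pair_count_fsetD :
  #|` A| * (#|` A| - #|` T|) <= max_pair_count A
    <= #|` A| * (#|` A| - #|` T|) + #|` T| ^ 2.
Proof.
apply/andP; split.
  exact: leq_trans pair_count_fsetD_self (pair_count_le_max _).
by apply: max_pair_count_le => U /eq_leq; apply: pair_count_fsetD_le.
Qed.

End FiniteSubgroup.

Local Open Scope ring_scope.

Lemma one_sub_ratio_sq (R : realFieldType) (k t M : nat) :
  (0 < k)%N -> (t <= k)%N -> (k * (k - t) <= M <= k * (k - t) + t ^ 2)%N ->
  (t%:R / k%:R : R) - (t%:R / k%:R) ^+ 2 <= (1 - M%:R / (k ^ 2)%N%:R : R)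
    <= t%:R / k%:R.
Proof.
move=> k_gt0 le_tk /andP[M_ge M_le].
have kR_neq0 : k%:R != 0 :> R by rewrite pnatr_eq0 -lt0n.
move: M_ge M_le; rewrite -!(ler_nat R) natrD !natrM natrB // => M_ge M_le.
apply/andP; split; rewrite -subr_ge0.
  have -> : 1 - M%:R / (k%:R * k%:R) - (t%:R / k%:R - (t%:R / k%:R) ^+ 2)
      = (k%:R * (k%:R - t%:R) + t%:R * t%:R - M%:R) / (k%:R * k%:R) :> R.
    by field.
  by rewrite divr_ge0 ?mulr_ge0 // subr_ge0.
have -> : t%:R / k%:R - (1 - M%:R / (k%:R * k%:R))
    = (M%:R - k%:R * (k%:R - t%:R)) / (k%:R * k%:R) :> R by field.
by rewrite divr_ge0 ?mulr_ge0 // subr_ge0.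
Qed.

Lemma dist_odds_prob (R : realFieldType) (d u e : R) :
  0 <= u <= 1 -> u <= d -> u - u ^+ 2 <= e <= u ->
  `|e - u / (1 + u)| <= d * (u / (1 + u)).
Proof.
move=> /andP[u_ge0 u_le1] le_ud /andP[e_ge e_le].
have u1_gt0 : 0 < 1 + u by lra.
set v := u / (1 + u).
have v_ge0 : 0 <= v by rewrite divr_ge0 // ltW.
have odds : u - v = u * v by rewrite /v; field; rewrite gt_eqF.
rewrite ler_norml; apply/andP; split; nra.
Qed.

Theorem mainTheorem5 (R : realFieldType) (delta : R) (hdelta : 0 < delta) :
  exists eta : R, 0 < eta /\
    forall (G : zmodType) (H T : {fset G}),
      is_fsubgroup H -> T `<=` H -> T != fset0 ->
      (#|` T|%:R / #|` H|%:R : R) < eta ->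
      `| eps_star R (H `\` T) - #|` T|%:R / #|` H|%:R |
        <= delta * (#|` T|%:R / #|` H|%:R).
Proof.
pose d := Num.min 1 delta.
have d_gt0 : 0 < d by rewrite lt_min ltr01.
have [d_le1 d_le_delta] : d <= 1 /\ d <= delta.
  by split; rewrite ge_min lexx ?orbT.
exists (d / (1 + d)); split=> [|G H T subH sTH].
  by rewrite divr_gt0 ?addr_gt0.
have -> : #|` H| = (#|` H `\` T| + #|` T|)%N.
  by rewrite cardfsDS // subnK // fsubset_leq_card.
set k := #|` H `\` T|; set t := #|` T|; rewrite natrD.
rewrite -cardfs_gt0 -(ltr_nat R) => t_gt0.
have n_gt0 : 0 < k%:R + t%:R :> R by have := ler0n R k; lra.
rewrite ltr_pdivrMr // mulrAC ltr_pdivlMr ?addr_gt0 //.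
move=> ratio_lt; have t_lt : t%:R < d * k%:R by nra.
have k_gt0 : (0 < k)%N by rewrite -(ltr_nat R); nra.
have le_tk : (t <= k)%N by rewrite -(ler_nat R); nra.
have -> : t%:R / (k%:R + t%:R) = (t%:R / k%:R) / (1 + t%:R / k%:R) :> R.
  by field; rewrite pnatr_eq0 -lt0n k_gt0 gt_eqF.
rewrite /eps_star; apply: dist_odds_prob.
- by rewrite divr_ge0 // ler_pdivrMr ?ltr0n // mul1r ler_nat.
- by rewrite ler_pdivrMr ?ltr0n //; have := ler0n R k; nra.
- exact: one_sub_ratio_sq (max_pair_count_fsetD subH sTH).
Qed.
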